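(* Let $K=\mathbb{Q}(\beta)$ be a totally real number field of degree $4$ with $\beta\in\mathcal{O}_K$. Then $\operatorname{disc} K\le \frac{2^{12}}{5^5}\,\lceil\!\overline{\beta}\!\rceil^{12}$, where $\lceil\!\overline{\beta}\!\rceil$ denotes the house of $\beta$.
   Context: $\mathcal{O}_K$ is the ring of integers of $K$. The house of $\beta\in K$ is $\max_i|\sigma_i(\beta)|$, the maximum over the real embeddings $\sigma_i:K\hookrightarrow\mathbb{R}$. $\operatorname{disc}K$ is the discriminant of $K$. *)

From mathcomp Require Import all_boot all_order all_algebra all_field.
Set Implicit Arguments. Unset Strict Implicit. Unset Printing Implicit Defensive.
Import Order.TTheory GRing.Theory Num.Theory.
Local Open Scope ring_scope.

(* Number fields are modelled as subfields of algC (algebraic closure of Q). *)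

Definition in_Qadj (beta x : algC) : Prop :=
  exists q : {poly rat}, x = (map_poly (ratr : rat -> algC) q).[beta].

Definition in_OK (beta x : algC) : Prop := in_Qadj beta x /\ x \in Aint.

Definition integral_basis (n : nat) (beta : algC) (w : 'I_n -> algC) : Prop :=
  [/\ forall j, in_OK beta (w j),
      forall x, in_OK beta x -> exists c : 'I_n -> int, x = \sum_j (c j)%:~R * w j
    & forall c : 'I_n -> int, \sum_j (c j)%:~R * w j = 0 -> forall j, c j = 0].

Definition field_degree (beta : algC) : nat := (size (minCpoly beta)).-1.

Definition totally_real (beta : algC) : Prop :=
  forall z, root (minCpoly beta) z -> z \is Num.real.

(* A complete system of the n embeddings of K = Q(beta) into algC:
   the restrictions of n automorphisms of algC that send beta to pairwise
   distinct conjugates (every embedding of K extends to such an automorphism,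
   and an embedding of Q(beta) is determined by the image of beta). *)
Definition embeddings_system (n : nat) (beta : algC)
    (s : 'I_n -> {rmorphism algC -> algC}) : Prop :=
  injective (fun i => s i beta).

Definition house (n : nat) (beta : algC) (s : 'I_n -> {rmorphism algC -> algC}) : algC :=
  \big[Num.max/0]_(i < n) `|s i beta|.

Definition disc_basis (n : nat) (s : 'I_n -> {rmorphism algC -> algC})
    (w : 'I_n -> algC) : algC :=
  (\det (\matrix_(i < n, j < n) s i (w j))) ^+ 2.

(* Let x_1 <= ... <= x_4 be the (real) conjugates of beta.  The Vandermonde
   matrix of the x_i is the matrix (sigma_i(w_j)) of an integral basis times an
   integer matrix, so disc K is at most prod_(i<j) (x_j - x_i)^2.  In terms of the
   consecutive gaps p, q, r, whose sum D = x_4 - x_1 is at most twice the house,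
   two AM-GM inequalities give 5^5 prod_(i<j) (x_j - x_i)^2 <= D^12. *)

From mathcomp Require Import all_boot all_order all_algebra all_field.
From mathcomp Require Import perm ring lra zify.
Set Implicit Arguments. Unset Strict Implicit. Unset Printing Implicit Defensive.
Import Order.TTheory GRing.Theory Num.Theory.
Local Open Scope ring_scope.

Section GapInequalities.
Variable R : realFieldType.
Implicit Types p q r s E : R.

Lemma amgm_weighted_1_4 s E : 0 <= s -> s <= E ->
  3125 * s * (E - s) ^+ 4 <= 256 * E ^+ 5.
Proof.
move=> s_ge0 s_leE; have E_ge0 : 0 <= E := le_trans s_ge0 s_leE.
have Es_ge0 : 0 <= E - s by rewrite subr_ge0.
have -> : 256 * E ^+ 5 = 3125 * s * (E - s) ^+ 4 + (5 * s - E) ^+ 2 *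
    (16 * E ^+ 3 + 40 * E ^+ 2 * (E - s) + 75 * E * (E - s) ^+ 2
     + 125 * (E - s) ^+ 3) by ring.
by rewrite lerDl mulr_ge0 ?sqr_ge0 // !addr_ge0 ?mulr_ge0 ?exprn_ge0.
Qed.

Lemma amgm_cross p q r : 0 <= p -> 0 <= q -> 0 <= r ->
  16 * (p * (q + r)) * (r * (p + q)) <= ((p + q + r) ^+ 2 - q ^+ 2) ^+ 2.
Proof.
move=> p_ge0 q_ge0 r_ge0.
have -> : ((p + q + r) ^+ 2 - q ^+ 2) ^+ 2 = 16 * (p * (q + r)) * (r * (p + q))
    + (p - r) ^+ 2 * (4 * q ^+ 2 + 4 * q * (p + r) + 4 * p * r + (p + r) ^+ 2)
  by ring.
by rewrite lerDl mulr_ge0 ?sqr_ge0 // !addr_ge0 ?mulr_ge0 ?sqr_ge0 ?addr_ge0.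
Qed.

(* With D = p + q + r the product is q D X for X = p (q + r) r (p + q); then
   [amgm_cross] bounds 16 X by (D^2 - q^2)^2 and [amgm_weighted_1_4] at
   s = q^2, E = D^2 finishes. *)
Lemma gap_product_bound p q r : 0 <= p -> 0 <= q -> 0 <= r ->
  3125 * (p * q * r * (p + q) * (q + r) * (p + q + r)) ^+ 2 <= (p + q + r) ^+ 12.
Proof.
move=> p_ge0 q_ge0 r_ge0.
have -> : p * q * r * (p + q) * (q + r) * (p + q + r)
    = q * (p + q + r) * (p * (q + r) * (r * (p + q))) by ring.
set D := p + q + r; set X := p * (q + r) * (r * (p + q)).
have D_ge0 : 0 <= D by rewrite !addr_ge0.
have qD_ge0 : 0 <= q * D by rewrite mulr_ge0.
have X16_ge0 : 0 <= 16 * X by rewrite !mulr_ge0 ?addr_ge0.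
have X16_le : 16 * X <= (D ^+ 2 - q ^+ 2) ^+ 2 by rewrite mulrA; exact: amgm_cross.
have prod_le : (q * D * (16 * X)) ^+ 2 <= (q * D * (D ^+ 2 - q ^+ 2) ^+ 2) ^+ 2.
  apply: lerXn2r; rewrite ?nnegrE; first exact: mulr_ge0.
    exact: mulr_ge0 qD_ge0 (sqr_ge0 _).
  exact: ler_wpM2l.
have q2_le : q ^+ 2 <= D ^+ 2 by rewrite ler_sqr ?nnegrE // /D; lra.
have amgm := amgm_weighted_1_4 (sqr_ge0 q) q2_le.
rewrite -(ler_pM2l (_ : 0 < 256)) //.
have -> : 256 * (3125 * (q * D * X) ^+ 2) = 3125 * (q * D * (16 * X)) ^+ 2 by ring.
apply: le_trans (ler_wpM2l _ prod_le) _ => //.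
have -> : 3125 * (q * D * (D ^+ 2 - q ^+ 2) ^+ 2) ^+ 2
    = D ^+ 2 * (3125 * q ^+ 2 * (D ^+ 2 - q ^+ 2) ^+ 4) by ring.
apply: le_trans (ler_wpM2l (sqr_ge0 D) amgm) _.
by rewrite mulrCA -exprM -exprD.
Qed.

End GapInequalities.

Definition diffprod (R : pzRingType) n (x : 'I_n -> R) : R :=
  \prod_(i < n) \prod_(j < n | (i < j)%N) (x j - x i).

Lemma diffprodE (R : comPzRingType) n (x : 'I_n -> R) :
  diffprod x = \det (Vandermonde n (\row_i x i)).
Proof.
rewrite det_Vandermonde.
by apply: eq_bigr => i _; apply: eq_bigr => j _; rewrite !mxE.
Qed.

Lemma sqr_diffprod_perm (R : comPzRingType) n (x : 'I_n -> R) (p : 'S_n) :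
  diffprod (x \o p) ^+ 2 = diffprod x ^+ 2.
Proof.
rewrite !diffprodE.
have -> : Vandermonde n (\row_i (x \o p) i) = col_perm p (Vandermonde n (\row_i x i)).
  by apply/matrixP => i j; rewrite !mxE.
by rewrite col_permE det_mulmx det_perm exprMn sqrr_sign mulr1.
Qed.

Lemma diffprod_neq0 (R : idomainType) n (x : 'I_n -> R) :
  injective x -> diffprod x != 0.
Proof.
move=> x_inj; apply/prodf_neq0 => i _; apply/prodf_neq0 => j lt_ij.
by rewrite subr_eq0 (inj_eq x_inj) eq_sym neq_ltn lt_ij.
Qed.

Lemma diffprod_real (R : numDomainType) n (x : 'I_n -> R) :
  (forall i, x i \is Num.real) -> diffprod x \is Num.real.
Proof.
by move=> x_real; apply/rpred_prod => i _; apply/rpred_prod => j _; rewrite rpredB.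
Qed.

Lemma diffprod4E (R : comPzRingType) (x : 'I_4 -> R) :
  diffprod x = (x 1 - x 0) * (x 2 - x 0) * (x 3 - x 0)
               * (x 2 - x 1) * (x 3 - x 1) * (x 3 - x 2).
Proof.
rewrite /diffprod; under eq_bigr => i _ do rewrite big_mkcond.
rewrite !big_ord_recl !big_ord0 /=.
have [-> -> -> ->] : [/\ lift ord0 (lift ord0 (lift ord0 ord0)) = 3 :> 'I_4,
  lift ord0 (lift ord0 ord0) = 2 :> 'I_4, lift ord0 ord0 = 1 :> 'I_4
  & ord0 = 0 :> 'I_4].
  by split; apply: val_inj.
by ring.
Qed.

Lemma exists_sorting_perm d (T : orderType d) n (x : 'I_n -> T) :
  exists p : 'S_n, forall i j : 'I_n, (i <= j)%N -> (x (p i) <= x (p j))%O.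
Proof.
set t := [tuple x i | i < n].
have [p Dp] : exists p : 'S_n, sort <=%O t = [tuple tnth t (p i) | i < n].
  by apply/tuple_permP; rewrite perm_sort.
exists p => i j le_ij.
have sorted_t : sorted <=%O (sort <=%O t) by apply: sort_sorted; exact: le_total.
have := sorted_leq_nth le_trans le_refl (x i) sorted_t.
rewrite Dp size_tuple => /(_ i j (ltn_ord i) (ltn_ord j) le_ij).
by rewrite -!tnth_nth !tnth_mktuple.
Qed.

Lemma sorted_diffprod4_bound (R : realFieldType) (x : 'I_4 -> R) h :
  (forall i j : 'I_4, (i <= j)%N -> x i <= x j) -> (forall i, `|x i| <= h) ->
  diffprod x ^+ 2 <= (2%:R ^+ 12 / 5%:R ^+ 5) * h ^+ 12.
Proof.
move=> x_mono x_le.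
have gap_ge0 (i j : 'I_4) : (i <= j)%N -> 0 <= x j - x i.
  by move=> /x_mono; rewrite subr_ge0.
have := gap_product_bound (gap_ge0 0 1 isT) (gap_ge0 1 2 isT) (gap_ge0 2 3 isT).
have -> : x 1 - x 0 + (x 2 - x 1) + (x 3 - x 2) = x 3 - x 0 by ring.
have -> : (x 1 - x 0) * (x 2 - x 1) * (x 3 - x 2) * (x 1 - x 0 + (x 2 - x 1))
    * (x 2 - x 1 + (x 3 - x 2)) * (x 3 - x 0) = diffprod x.
  by rewrite diffprod4E; ring.
move=> diffprod_le.
have span_le : (x 3 - x 0) ^+ 12 <= (2 * h) ^+ 12.
  apply: lerXn2r; rewrite ?nnegrE ?gap_ge0 //.
    by have := x_le 0; rewrite ler_norml; lra.
  by move: (x_le 0) (x_le 3); rewrite !ler_norml; lra.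
rewrite mulrAC ler_pdivlMr ?exprn_gt0 // mulrC -exprMn.
by apply: le_trans span_le; rewrite -natrX; exact: diffprod_le.
Qed.

Lemma diffprod4_bound (R : realFieldType) (x : 'I_4 -> R) h :
  (forall i, `|x i| <= h) -> diffprod x ^+ 2 <= (2%:R ^+ 12 / 5%:R ^+ 5) * h ^+ 12.
Proof.
move=> x_le; have [p x_mono] := exists_sorting_perm x.
by rewrite -(sqr_diffprod_perm x p); apply: sorted_diffprod4_bound => // i; apply: x_le.
Qed.

Lemma algRval_max (a b : algR) :
  algRval (Num.max a b) = Num.max (algRval a) (algRval b).
Proof.
rewrite /Order.max; have -> : (algRval a < algRval b) = (a < b) by [].
by case: ifP.
Qed.

Lemma real_diffprod4_bound (x : 'I_4 -> algC) : (forall i, x i \is Creal) ->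
  diffprod x ^+ 2 <= (2%:R ^+ 12 / 5%:R ^+ 5) * (\big[Num.max/0]_i `|x i|) ^+ 12.
Proof.
move=> x_real; pose xr i := in_algR (x_real i).
have -> : diffprod x = algRval (diffprod xr).
  rewrite rmorph_prod; apply: eq_bigr => i _.
  by rewrite rmorph_prod; apply: eq_bigr => j _; rewrite rmorphB.
have -> : \big[Num.max/0]_i `|x i| = algRval (\big[Num.max/0]_i `|xr i|).
  by rewrite (big_morph algRval algRval_max (rmorph0 _)).
have := diffprod4_bound (fun i => le_bigmax 0 (fun j => `|xr j|) i).
(* The order of algR is that of algC, read through algRval. *)
by rewrite -[_ <= _]/(algRval _ <= algRval _) !(rmorphXn, rmorphM, fmorphV, rmorph_nat).
Qed.

Lemma totally_real_conj beta (f : {rmorphism algC -> algC}) :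
  totally_real beta -> f beta \is Creal.
Proof.
move=> beta_real; apply: beta_real.
have [p [Dp _] _] := minCpolyP beta.
have := root_minCpoly beta; rewrite Dp /root => /eqP p_beta.
apply/eqP; rewrite -(rmorph0 f) -p_beta -horner_map /= -map_poly_comp.
by congr (_.[_]); apply: eq_map_poly => q /=; rewrite fmorph_rat.
Qed.

(* k is the determinant of the change of basis from w to the powers of beta. *)
Lemma diffprod_conj_eq n beta (s : 'I_n -> {rmorphism algC -> algC}) w :
  beta \in Aint -> integral_basis beta w ->
  exists k : int,
    diffprod (fun i => s i beta) = \det (\matrix_(i, j) s i (w j)) * k%:~R.
Proof.
move=> beta_int [_ w_span _].
have /fin_all_exists[c Dc] : forall k : 'I_n,
    exists c : 'I_n -> int, beta ^+ k = \sum_j (c j)%:~R * w j.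
  move=> k; apply: w_span; split; last exact: rpredX.
  by exists 'X^k; rewrite map_polyXn hornerXn.
exists (\det (\matrix_(j, k) c k j)).
rewrite diffprodE -det_tr -det_map_mx -det_mulmx; congr (\det _).
apply/matrixP => i k; rewrite !mxE -rmorphXn Dc rmorph_sum.
by apply: eq_bigr => j _; rewrite !mxE rmorphM rmorph_int mulrC.
Qed.

Lemma ler_pMsqrz (R : numDomainType) (a : R) (k : int) :
  k != 0 -> 0 <= a * k%:~R ^+ 2 -> a <= a * k%:~R ^+ 2.
Proof.
move=> k_neq0; have k2_ge1 : 1 <= k%:~R ^+ 2 :> R.
  by rewrite -rmorphXn ler1z expr2; lia.
by rewrite pmulr_lge0 ?(lt_le_trans ltr01) // => a_ge0; apply: ler_peMr.
Qed.

Theorem proposition2p9 (beta : algC)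
  (s : 'I_4 -> {rmorphism algC -> algC}) (w : 'I_4 -> algC) :
  beta \in Aint ->
  field_degree beta = 4%N ->
  totally_real beta ->
  embeddings_system beta s ->
  integral_basis beta w ->
  disc_basis s w <= (2%:R ^+ 12 / 5%:R ^+ 5) * house beta s ^+ 12.
Proof.
move=> beta_int _ beta_real s_inj w_basis.
have conj_real i : s i beta \is Creal := totally_real_conj (s i) beta_real.
have [k Dx] := diffprod_conj_eq s beta_int w_basis.
have k_neq0 : k != 0.
  by apply: contraNneq (diffprod_neq0 s_inj) => k0; rewrite Dx k0 mulr0.
apply: le_trans (real_diffprod4_bound conj_real).
rewrite Dx exprMn; apply: ler_pMsqrz k_neq0 _.
by rewrite -exprMn -Dx real_exprn_even_ge0 ?diffprod_real.
Qed.
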